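(* Let $T_C$ be a finite complete binary tree with vertices $v_1,\dots,v_M$, each vertex $v_i$ carrying a parameter $l_i\in[0,1]$. Define functions $m, \tilde m$ on the vertices of $T_C$ top-down by $$m(v_i) = \big(\tilde m(\mathrm{parent}(v_i))\big)^{1/2}\, l_i, \qquad \tilde m(v_i) = \big(\tilde m(\mathrm{parent}(v_i))\big)^{1/2}\,(1-l_i),$$ with the convention $\tilde m(\mathrm{parent}(\mathrm{root}(T_C))) = 1$. Then for every internal tree $T$ of $T_C$ with $N$ leaves $L_1(T),\dots,L_N(T)$, $$p(T) = \prod_{n=1}^N m(L_n(T)).$$
   Context: All trees are rooted, and children are designated left or right. A complete binary tree is a rooted tree in which every non-leaf vertex has exactly two children (a left and a right child). A full binary tree is a rooted tree in which every vertex has 0 or 2 children. An internal tree of $T_C$ is a full binary tree $T$ with $\mathrm{root}(T)=\mathrm{root}(T_C)$ whose vertices and edges are a subset of those of $T_C$ (left/right children as in $T_C$). $L(T)=(L_1(T),\dots,L_N(T))$ denotes the leaves of $T$ ordered from left-most to right-most. The probability of an internal tree is $p(T)=\pi(\mathrm{root}(T))$, where $\pi(v_i)=l_i$ if $v_i\in L(T)$ and $\pi(v_i)=(1-l_i)\,\pi(\mathrm{left}(v_i))\,\pi(\mathrm{right}(v_i))$ otherwise, with $\mathrm{left},\mathrm{right}$ denoting children in $T$. *)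

From mathcomp Require Import all_boot all_order all_algebra.
Set Implicit Arguments. Unset Strict Implicit. Unset Printing Implicit Defensive.
Import Order.TTheory GRing.Theory Num.Theory.
Local Open Scope ring_scope.

Section Trees.
Variable R : rcfType.

(* A finite complete binary tree T_C: every vertex is a leaf or has exactly a
   left and a right child; every vertex v_i carries its parameter l_i. *)
Inductive ctree : Type :=
| CLeaf of R
| CNode of R & ctree & ctree.

Definition label (t : ctree) : R :=
  match t with CLeaf l => l | CNode l _ _ => l end.

Fixpoint params_in01 (t : ctree) : Prop :=
  match t with
  | CLeaf l => 0 <= l <= 1
  | CNode l a b => 0 <= l <= 1 /\ params_in01 a /\ params_in01 b
  end.

(* Vertices of T_C are addressed by their path from the root:
   false = go to the left child, true = go to the right child. *)
Fixpoint valid_addr (t : ctree) (s : seq bool) : bool :=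
  match s, t with
  | [::], _ => true
  | b :: s', CNode _ a c => valid_addr (if b then c else a) s'
  | _ :: _, CLeaf _ => false
  end.

(* m and m~ computed top-down; pm is m~(parent) of the current vertex
   (equal to 1 for the root). Values at invalid addresses are irrelevant (0). *)
Fixpoint m_from (pm : R) (t : ctree) (s : seq bool) : R :=
  match s, t with
  | [::], _ => Num.sqrt pm * label t
  | b :: s', CNode l a c =>
      m_from (Num.sqrt pm * (1 - l)) (if b then c else a) s'
  | _ :: _, CLeaf _ => 0
  end.

Fixpoint mtilde_from (pm : R) (t : ctree) (s : seq bool) : R :=
  match s, t with
  | [::], _ => Num.sqrt pm * (1 - label t)
  | b :: s', CNode l a c =>
      mtilde_from (Num.sqrt pm * (1 - l)) (if b then c else a) s'
  | _ :: _, CLeaf _ => 0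
  end.

Definition m (TC : ctree) (s : seq bool) : R := m_from 1 TC s.
Definition mtilde (TC : ctree) (s : seq bool) : R := mtilde_from 1 TC s.

(* Internal trees of T_C: full binary trees with the same root whose vertices
   and edges are among those of T_C.  Such a tree is determined by, at each of
   its vertices, whether it stops (leaf of T) or keeps both T_C-children. *)
Inductive itree : Type :=
| Stop
| Split of itree & itree.

Fixpoint is_internal (T : itree) (TC : ctree) : bool :=
  match T, TC with
  | Stop, _ => true
  | Split a b, CNode _ x y => is_internal a x && is_internal b y
  | Split _ _, CLeaf _ => false
  end.

(* addresses (in T_C) of the leaves L_1(T),...,L_N(T), left-most first *)
Fixpoint leaves (T : itree) : seq (seq bool) :=
  match T with
  | Stop => [:: [::]]
  | Split a b => map (cons false) (leaves a) ++ map (cons true) (leaves b)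
  end.

(* p(T) = pi(root(T)) *)
Fixpoint prob (T : itree) (TC : ctree) : R :=
  match T, TC with
  | Stop, t => label t
  | Split a b, CNode l x y => (1 - l) * prob a x * prob b y
  | Split _ _, CLeaf _ => 0
  end.

End Trees.

From mathcomp Require Import all_boot all_order all_algebra.
Import Order.TTheory GRing.Theory Num.Theory.
Local Open Scope ring_scope.

(* Both children of an internal vertex v receive the factor sqrt(m~(v)), so
   across the two subtrees these factors multiply back to
   m~(v) = sqrt(m~(parent v)) (1 - l_v), exactly the factor of pi(v).
   Induction on T then shows that the product of m over the leaves below a
   vertex is sqrt(m~(parent)) times pi of that vertex; at the root
   m~(parent) = 1. *)

Lemma prod_m_from_leaves (R : rcfType) (T : itree) (t : ctree R) (q : R) :
  0 <= q -> params_in01 t -> is_internal T t ->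
  \prod_(s <- leaves T) m_from q t s = Num.sqrt q * prob T t.
Proof.
elim: T t q => [|a IHa b IHb] t q q_ge0 t01 Tt.
  by rewrite big_seq1; case: t {t01 Tt}.
case: t t01 Tt => [//|l x y] /= [/andP[_ l_le1] [x01 y01]] /andP[ax_int by_int].
set q' := Num.sqrt q * (1 - l).
have q'_ge0 : 0 <= q' by rewrite mulr_ge0 ?sqrtr_ge0 ?subr_ge0.
have sqrt_q'_sq : Num.sqrt q' * Num.sqrt q' = q' by rewrite -expr2 sqr_sqrtr.
rewrite big_cat !big_map /= (IHa x _ q'_ge0 x01 ax_int) (IHb y _ q'_ge0 y01 by_int).
by rewrite mulrACA sqrt_q'_sq !mulrA.
Qed.

Theorem mainTheorem3 (R : rcfType) (TC : ctree R) (T : itree) :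
  params_in01 TC -> is_internal T TC ->
  prob T TC = \prod_(s <- leaves T) m TC s.
Proof.
move=> TC01 T_internal.
by rewrite /m prod_m_from_leaves ?ler01 // sqrtr1 mul1r.
Qed.
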